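(* Let $\gamma,\sigma:[a,b]\to V$ be continuous paths of bounded variation and let $f:(-\pi,\pi)\to\mathbb{C}$ be bounded and integrable with Fourier coefficients $\phi_k=\frac1{2\pi}\int_{-\pi}^\pi f(x)e^{-ikx}dx$, $k\in\mathbb{Z}$. (1) If $\phi_k=0$ for all $k<0$, then $K_\phi^{\gamma,\sigma}(s,t)=\frac1{2\pi}\int_{-\pi}^\pi K^{e^{-ix}\gamma,\sigma}(s,t)f(x)\,dx$. (2) Suppose $f$ is real-valued with real Fourier series $f=a_0+\sum_{k\ge1}a_k\cos(k\cdot)+\sum_{k\ge1}b_k\sin(k\cdot)$, $a_k,b_k\in\mathbb{R}$. If $\langle p,q\rangle_\phi:=\sum_{k\ge0}a_k\langle p_k,q_k\rangle_k$ and $K_\phi^{\gamma,\sigma}(s,t):=\langle S(\gamma)_{a,s},S(\sigma)_{a,t}\rangle_\phi$, then \[ K_\phi^{\gamma,\sigma}(s,t)=\frac1\pi\int_{-\pi}^\pi\mathcal{R}K_x^{\gamma,\sigma}(s,t)f(x)\,dx-a_0, \] where $\mathcal{R}K_x^{\gamma,\sigma}(s,t)=\operatorname{Re}K^{e^{ix}\gamma,\sigma}(s,t)$.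
   Context: $V$ is a finite-dimensional real inner product space, $\langle\cdot,\cdot\rangle_k$ the induced Hilbert–Schmidt inner product on $V^{\otimes k}$. Signature: $S(\gamma)^0=1$, $S(\gamma)^k_{s,t}=\int_{s<u_1<\dots<u_k<t}d\gamma_{u_1}\otimes\cdots\otimes d\gamma_{u_k}$; $p_k$ is the degree-$k$ component of $p$. Write $c_k(s,t)=\langle S(\gamma)^k_{a,s},S(\sigma)^k_{a,t}\rangle_k$. In (1), $K_\phi^{\gamma,\sigma}(s,t)=\sum_{k\in\mathbb{Z}}\phi_kc_{|k|}(s,t)$. For $w\in\mathbb{C}$, $K^{w\gamma,\sigma}(s,t):=\sum_{k\ge0}w^kc_k(s,t)$. *)

From HB Require Import structures.
From mathcomp Require Import all_boot all_order all_algebra.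
From mathcomp Require Import all_classical all_reals all_analysis.
From mathcomp Require Import complex.
Set Implicit Arguments. Unset Strict Implicit. Unset Printing Implicit Defensive.
Import Order.TTheory GRing.Theory Num.Theory.
Import numFieldNormedType.Exports.
Local Open Scope classical_set_scope.
Local Open Scope ring_scope.
Local Open Scope complex_scope.

(* V is modelled as R^d = 'rV[R]_d with the standard (Euclidean) inner
   product; the Hilbert--Schmidt inner product on V^{(x)k} is then the sum
   over all words (multi-indices) of length k of products of coordinates. *)

Section Defs.
Variable R : realType.

(* a partition of [a,b] is given by the points s = [:: x1; ...; xn] with
   a = x0 < x1 < ... < xn = b *)
Definition is_partition (a b : R) (s : seq R) : Prop :=
  path <%R a s /\ last a s = b.

Definition mesh (a : R) (s : seq R) : R :=
  \big[Num.max/0]_(i < size s) (nth 0 s i - nth 0 (a :: s) i).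

Definition RS_sum (f g : R -> R) (a : R) (s xi : seq R) : R :=
  \sum_(i < size s) f (nth 0 xi i) * (g (nth 0 s i) - g (nth 0 (a :: s) i)).

Definition is_RS_integral (f g : R -> R) (a b I : R) : Prop :=
  forall e : R, 0 < e -> exists2 delta : R, 0 < delta &
    forall s xi : seq R, is_partition a b s -> size xi = size s ->
      mesh a s < delta ->
      (forall i, (i < size s)%N ->
         nth 0 (a :: s) i <= nth 0 xi i <= nth 0 s i) ->
      `|RS_sum f g a s xi - I| < e.

Definition RSint (f g : R -> R) (a b : R) : R :=
  xget 0 [set I | is_RS_integral f g a b I].

Definition eucl_norm (d : nat) (v : 'rV[R]_d) : R :=
  Num.sqrt (\sum_(j < d) v ord0 j ^+ 2).

Definition path_variation_sum (d : nat) (g : R -> 'rV[R]_d) (a : R)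
  (s : seq R) : R :=
  \sum_(i < size s) eucl_norm (g (nth 0 s i) - g (nth 0 (a :: s) i)).

Definition bounded_variation_path (d : nat) (g : R -> 'rV[R]_d) (a b : R)
  : Prop :=
  exists M : R, forall s, is_partition a b s -> path_variation_sum g a s <= M.

(* sigrev g a [:: i_k; ...; i_1] t  =  S(g)^{i_1 ... i_k}_{a,t}, defined by
   S^{w i}_{a,t} = \int_a^t S^{w}_{a,u} dg^i_u *)
Fixpoint sigrev (d : nat) (g : R -> 'rV[R]_d) (a : R) (w : seq 'I_d) (t : R)
  : R :=
  match w with
  | [::] => 1
  | i :: w' => RSint (fun u => sigrev g a w' u) (fun u => g u ord0 i) a t
  end.

Definition sig_coord (d : nat) (g : R -> 'rV[R]_d) (a : R) (w : seq 'I_d)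
  (t : R) : R := sigrev g a (rev w) t.

Definition sig_ip (d : nat) (gamma sigma : R -> 'rV[R]_d) (a : R) (k : nat)
  (s t : R) : R :=
  \sum_(w : k.-tuple 'I_d) sig_coord gamma a w s * sig_coord sigma a w t.

Definition cvgC (u : nat -> R[i]) (l : R[i]) : Prop :=
  forall e : R, 0 < e -> exists N : nat, forall n : nat, (N <= n)%N ->
    `|u n - l| < e%:C.

Definition limC (u : nat -> R[i]) : R[i] := xget 0 [set l | cvgC u l].

Definition expi (x : R) : R[i] := cos x +i* sin x.

Definition int_pi (f : R -> R) : R :=
  Rintegral (@lebesgue_measure R) `]-pi, pi[ f.

Definition int_piC (f : R -> R[i]) : R[i] :=
  int_pi (fun x => complex.Re (f x)) +i* int_pi (fun x => complex.Im (f x)).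

Definition fourier_coef (f : R -> R[i]) (k : int) : R[i] :=
  ((2 * pi)^-1)%:C * int_piC (fun x => f x * expi (- (k%:~R * x))).

(* K_phi(s,t) = \sum_{k in Z} phi_k c_{|k|}(s,t)  (limit of symmetric sums) *)
Definition K_phi (d : nat) (phi : int -> R[i]) (gamma sigma : R -> 'rV[R]_d)
  (a s t : R) : R[i] :=
  limC (fun N => \sum_(i < (2 * N).+1)
          phi (i%:Z - N%:Z) * (sig_ip gamma sigma a `|i%:Z - N%:Z|%N s t)%:C).

(* K^{w gamma, sigma}(s,t) = \sum_{k >= 0} w^k c_k(s,t) *)
Definition K_w (d : nat) (w : R[i]) (gamma sigma : R -> 'rV[R]_d)
  (a s t : R) : R[i] :=
  limC (fun N => \sum_(k < N) w ^+ k * (sig_ip gamma sigma a k s t)%:C).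

Definition fourier_a (f : R -> R) (k : nat) : R :=
  if k == 0%N then (2 * pi)^-1 * int_pi f
  else pi^-1 * int_pi (fun x => f x * cos (k%:R * x)).

Definition fourier_b (f : R -> R) (k : nat) : R :=
  pi^-1 * int_pi (fun x => f x * sin (k%:R * x)).

Definition K_phi_real (d : nat) (f : R -> R) (gamma sigma : R -> 'rV[R]_d)
  (a s t : R) : R :=
  limn (fun N => \sum_(k < N) fourier_a f k * sig_ip gamma sigma a k s t).

End Defs.

From HB Require Import structures.
From mathcomp Require Import all_boot all_order all_algebra.
From mathcomp Require Import all_classical all_reals all_analysis.
From mathcomp Require Import complex measurable_realfun.
From mathcomp Require Import ring lra.
Import Order.TTheory GRing.Theory Num.Theory.
Import numFieldNormedType.Exports.
Set Implicit Arguments. Unset Strict Implicit. Unset Printing Implicit Defensive.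
Local Open Scope classical_set_scope.
Local Open Scope ring_scope.
Local Open Scope complex_scope.

(* The coefficients c_k(s,t) decay factorially.  By induction on the word w,
   |S(g)^w_{a,t}| <= V(t)^|w| / |w|!, where V(t) is the variation of g on
   [a,t]: every left-point Riemann-Stieltjes sum of the next iterated integral
   is dominated by the telescoping sum of V^(k+1)/(k+1)! over the partition.
   Summing over the d^k words gives |c_k| <= (d M_gamma M_sigma)^k / k!, a
   summable sequence.  Hence on |w| = 1 the series K^{w gamma, sigma} converges,
   and for bounded f the series sum_k c_k e^(+-ikx) f(x) may be integrated
   term by term over (-pi, pi), the partial sums being dominated by a constant.
   The k-th term integrates to 2 pi phi_k c_k, resp. (for the real part) to
   pi a_k c_k when k >= 1 and to 2 pi a_0 when k = 0, which gives (1) once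
   phi_k = 0 for k < 0, and (2) with the correction -a_0. *)

Section ExpCoeff.
Variable R : realType.
Implicit Types p q x y : R.

Lemma exp_coeff0 x : exp_coeff x 0 = 1.
Proof. by rewrite /exp_coeff /= expr0 fact0 divr1. Qed.

Lemma ler_exp_coeff p q k : 0 <= p -> p <= q -> exp_coeff p k <= exp_coeff q k.
Proof.
move=> p0 pq; rewrite /exp_coeff /= ler_wpM2r ?invr_ge0//.
by rewrite lerXn2r// nnegrE (le_trans p0).
Qed.

(* Left-endpoint estimate of the integral of x^k/k! over [p, q]. *)
Lemma exp_coeff_le_increment p q k : 0 <= p -> p <= q ->
  exp_coeff p k * (q - p) <= exp_coeff q k.+1 - exp_coeff p k.+1.
Proof.
move=> p0 pq; have q0 := le_trans p0 pq.
have sum_ge : k.+1%:R * p ^+ k <= \sum_(i < k.+1) q ^+ (k - i) * p ^+ i.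
  have -> : k.+1%:R * p ^+ k = \sum_(i < k.+1) p ^+ k.
    by rewrite sumr_const card_ord mulr_natl.
  apply: ler_sum => -[i /= ik] _; rewrite ltnS in ik.
  rewrite -{1}(subnK ik) exprD ler_wpM2r ?exprn_ge0//.
  by rewrite lerXn2r ?nnegrE.
have -> : p ^+ k / k`!%:R * (q - p) = (q - p) * (k.+1%:R * p ^+ k) / (k.+1)`!%:R.
  by rewrite factS natrM; field; rewrite nat1r !pnatr_eq0 -lt0n fact_gt0.
rewrite /exp_coeff /= -mulrBl subrXX ler_wpM2r ?invr_ge0//.
by rewrite ler_wpM2l ?subr_ge0.
Qed.

Lemma exp_coeff_mul_le x y n k : 0 <= x -> 0 <= y ->
  exp_coeff x k * exp_coeff y k *+ n ^ k <= exp_coeff (n%:R * x * y) k.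
Proof.
move=> x0 y0; rewrite /exp_coeff /= -mulr_natr natrX !exprMn.
set f := k`!%:R; have f_ge1 : 1 <= f by rewrite ler1n fact_gt0.
have -> : x ^+ k / f * (y ^+ k / f) * n%:R ^+ k =
    n%:R ^+ k * x ^+ k * y ^+ k / f * f^-1 by ring.
rewrite ler_piMr ?invf_le1 ?(lt_le_trans ltr01)//.
by rewrite divr_ge0 ?mulr_ge0 ?exprn_ge0 ?(le_trans ler01 f_ge1).
Qed.

End ExpCoeff.

Section Variation.
Variables (R : realType) (d : nat) (g : R -> 'rV[R]_d) (a b M : R).
Hypothesis variation_bounded :
  forall s, is_partition a b s -> path_variation_sum g a s <= M.
Local Notation pvs := (path_variation_sum g a).

Lemma eucl_norm_ge0 (v : 'rV[R]_d) : 0 <= eucl_norm v.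
Proof. exact: sqrtr_ge0. Qed.

Lemma eucl_norm0 : eucl_norm (0 : 'rV[R]_d) = 0.
Proof. by rewrite /eucl_norm big1 ?sqrtr0// => j _; rewrite mxE expr0n. Qed.

Lemma abs_coord_le_eucl_norm (v : 'rV[R]_d) i : `|v ord0 i| <= eucl_norm v.
Proof.
rewrite /eucl_norm -sqrtr_sqr ler_sqrt ?sumr_ge0// => [|j _]; last exact: sqr_ge0.
by rewrite (bigD1 i) //= lerDl sumr_ge0 // => j _; exact: sqr_ge0.
Qed.

Lemma path_variation_sum_ge0 s : 0 <= pvs s.
Proof. by apply: sumr_ge0 => i _; exact: eucl_norm_ge0. Qed.

Lemma path_variation_sum_rcons s y :
  pvs (rcons s y) = pvs s + eucl_norm (g y - g (last a s)).
Proof.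
rewrite /path_variation_sum size_rcons big_ord_recr /=; congr (_ + _).
  apply: eq_bigr => i _; rewrite -rcons_cons !nth_rcons /= ltn_ord.
  by rewrite ltnS ltnW.
by rewrite -rcons_cons !nth_rcons /= ltnn eqxx ltnSn (last_nth 0).
Qed.

Lemma is_partition_rcons x y s :
  is_partition a x s -> x < y -> is_partition a y (rcons s y).
Proof. by move=> [ps ls] xy; split; rewrite ?last_rcons// rcons_path ps ls. Qed.

Let partial_variation_bounded x s : x <= b -> is_partition a x s -> pvs s <= M.
Proof.
move=> xb ps; have [xb_eq|xb'] := eqVneq x b.
  by rewrite xb_eq in ps; exact: variation_bounded.
apply: le_trans (variation_bounded (is_partition_rcons ps _)) => //.
  by rewrite path_variation_sum_rcons lerDl eucl_norm_ge0.
by rewrite lt_neqAle xb' xb.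
Qed.

Definition variation x := sup [set pvs s | s in is_partition a x].

Let variation_set_neq0 x : a <= x -> [set pvs s | s in is_partition a x] !=set0.
Proof.
move=> ax; have [ax_eq|ax'] := eqVneq a x.
  by exists (pvs [::]); exists [::]; rewrite // -ax_eq.
exists (pvs [:: x]); exists [:: x] => //; split => //=.
by rewrite andbT lt_neqAle ax' ax.
Qed.

Lemma variation_ge x s : x <= b -> is_partition a x s -> pvs s <= variation x.
Proof.
move=> xb ps; apply: ub_le_sup; last by exists s.
by exists M => _ [s' ps' <-]; exact: partial_variation_bounded ps'.
Qed.

Lemma variation_ge0 x : a <= x -> x <= b -> 0 <= variation x.
Proof.
move=> ax xb; have [_ [s ps _]] := variation_set_neq0 ax.
exact: le_trans (path_variation_sum_ge0 s) (variation_ge xb ps).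
Qed.

Lemma variation_le x : a <= x -> x <= b -> variation x <= M.
Proof.
move=> ax xb; apply: ge_sup (variation_set_neq0 ax) _ => _ [s ps <-].
exact: partial_variation_bounded ps.
Qed.

Lemma bounded_variation_ge0 : a <= b -> 0 <= M.
Proof. by move=> ab; exact: le_trans (variation_ge0 ab _) (variation_le ab _). Qed.

Lemma variation_increment x y : a <= x -> x <= y -> y <= b ->
  variation x + eucl_norm (g y - g x) <= variation y.
Proof.
move=> ax xy yb; have [<-|xy'] := eqVneq x y; first by rewrite subrr eucl_norm0 addr0.
rewrite -lerBrDr; apply: ge_sup (variation_set_neq0 ax) _ => _ [s ps <-].
rewrite lerBrDr; have := variation_ge yb (is_partition_rcons ps _).
by rewrite path_variation_sum_rcons (proj2 ps); apply; rewrite lt_neqAle xy' xy.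
Qed.

End Variation.

Section RiemannStieltjes.
Variable R : realType.
Implicit Types (a t : R) (s : seq R).

Lemma is_partition_step a t s : is_partition a t s ->
  forall i, (i < size s)%N -> nth 0 (a :: s) i < nth 0 s i.
Proof. by move=> [/(pathP 0)]. Qed.

Lemma is_partition_between a t s : is_partition a t s ->
  forall i, (i <= size s)%N -> a <= nth 0 (a :: s) i <= t.
Proof.
move=> [ps <-] i si; have sorted_s : sorted <=%R (a :: s).
  by apply: sub_path ps => x y /ltW.
have nth_le j k : (j <= k <= size s)%N -> nth 0 (a :: s) j <= nth 0 (a :: s) k.
  move=> /andP[jk ks]; apply: (sorted_leq_nth le_trans lexx) => //.
  by rewrite unfold_in /= ltnS (leq_trans jk).
by rewrite (nth_le 0%N i) ?si// (last_nth 0) nth_le // si leqnn.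
Qed.

Definition left_tags a s := take (size s) (a :: s).

Lemma size_left_tags a s : size (left_tags a s) = size s.
Proof. by rewrite size_takel. Qed.

Lemma nth_left_tags a s i : (i < size s)%N -> nth 0 (left_tags a s) i = nth 0 (a :: s) i.
Proof. by move=> si; rewrite /left_tags nth_take. Qed.

Lemma RS_sum_left_tags (f g : R -> R) a s : RS_sum f g a s (left_tags a s) =
  \sum_(i < size s) f (nth 0 (a :: s) i) * (g (nth 0 s i) - g (nth 0 (a :: s) i)).
Proof. by apply: eq_bigr => i _; rewrite nth_left_tags. Qed.

Lemma exists_fine_partition a t del : a <= t -> 0 < del ->
  exists2 s, is_partition a t s & mesh a s < del.
Proof.
move=> at0 del0; have [<-|at'] := eqVneq a t.
  by exists [::]; [split|rewrite /mesh big_ord0].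
have lt_at : a < t by rewrite lt_neqAle at' at0.
pose n := (Num.truncn ((t - a) / del)).+1.
pose step := (t - a) / n%:R.
have step_gt0 : 0 < step by rewrite divr_gt0 ?subr_gt0.
have step_lt : step < del.
  by rewrite ltr_pdivrMr // mulrC -ltr_pdivrMr//; exact: truncnS_gt.
pose s := mkseq (fun j => a + j.+1%:R * step) n.
have nth_s j : (j < n)%N -> nth 0 s j = a + j.+1%:R * step.
  by move=> jn; rewrite nth_mkseq.
have nth_as j : (j < n)%N -> nth 0 (a :: s) j = a + j%:R * step.
  by case: j => [|j] jn /=; rewrite ?mul0r ?addr0// nth_s// ltnW.
have gap j : (j < n)%N -> nth 0 s j - nth 0 (a :: s) j = step.
  by move=> jn; rewrite nth_s// nth_as// -nat1r mulrDl mul1r; ring.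
exists s; first split.
- apply/(pathP 0) => j; rewrite size_mkseq => jn.
  by rewrite -subr_gt0 gap.
- rewrite (last_nth 0) size_mkseq /= nth_s// /step mulrC divfK ?pnatr_eq0//.
  by rewrite addrC subrK.
- apply: le_lt_trans step_lt; rewrite /mesh size_mkseq.
  by apply: bigmax_le => [|j _]; [exact: ltW|rewrite gap].
Qed.

(* [RSint] is [0] when the integral does not exist, hence [0 <= B]. *)
Lemma RSint_norm_le (f g : R -> R) a t B : a <= t -> 0 <= B ->
  (forall s, is_partition a t s -> `|RS_sum f g a s (left_tags a s)| <= B) ->
  `|RSint f g a t| <= B.
Proof.
move=> at0 B0 RS_le; rewrite /RSint.
have [[I RSI]|no_integral] := pselect (exists I, is_RS_integral f g a t I); last first.
  by rewrite xgetPN ?normr0// => I RSI; apply: no_integral; exists I.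
move: (xgetPex 0 (ex_intro _ I RSI)); set J := xget 0 _ => RSJ.
apply/ler_addgt0Pr => e e0; have [del del0 RS_near] := RSJ e e0.
have [s ps mesh_s] := exists_fine_partition at0 del0.
have tags_between i : (i < size s)%N ->
    nth 0 (a :: s) i <= nth 0 (left_tags a s) i <= nth 0 s i.
  by move=> si; rewrite nth_left_tags// lexx ltW// (is_partition_step ps).
have := RS_near s _ ps (size_left_tags a s) mesh_s tags_between.
set S := RS_sum _ _ _ _ _ => /ltW close.
have -> : J = S - (S - J) by ring.
by apply: le_trans (ler_normB _ _) _; apply: lerD => //; exact: RS_le.
Qed.

End RiemannStieltjes.

Section SignatureBound.
Variables (R : realType) (d : nat) (g : R -> 'rV[R]_d) (a b M : R).
Hypothesis variation_bounded :
  forall s, is_partition a b s -> path_variation_sum g a s <= M.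
Local Notation V := (variation g a).

Lemma norm_sigrev_le w t : a <= t -> t <= b ->
  `|sigrev g a w t| <= exp_coeff (V t) (size w).
Proof.
elim: w t => [|i w IH] t at0 tb /=; first by rewrite normr1 exp_coeff0.
apply: (RSint_norm_le at0 (exp_coeff_ge0 _ (variation_ge0 variation_bounded at0 tb))).
move=> s ps; rewrite RS_sum_left_tags; set x := nth 0 (a :: s).
have x_between j : (j <= size s)%N -> a <= x j <= b.
  by move=> js; have /andP[-> /le_trans->] := is_partition_between ps js.
pose F j := exp_coeff (V (x j)) (size w).+1.
apply: le_trans (ler_norm_sum _ _ _) _.
apply: (@le_trans _ _ (\sum_(j < size s) (F j.+1 - F j))).
  apply: ler_sum => j _; have /andP[xj0 xj1] := x_between j (ltnW (ltn_ord j)).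
  have /andP[xSj0 xSj1] := x_between j.+1 (ltn_ord j).
  have xjSj : x j <= x j.+1 := ltW (is_partition_step ps (ltn_ord j)).
  have incr := variation_increment variation_bounded xj0 xjSj xSj1.
  rewrite normrM; apply: le_trans _ (exp_coeff_le_increment _ _ _).
  - apply: ler_pM => //; first exact: IH.
    apply: le_trans (_ : eucl_norm (g (x j.+1) - g (x j)) <= _); last by rewrite lerBrDl.
    by have := abs_coord_le_eucl_norm (g (x j.+1) - g (x j)) i; rewrite !mxE.
  - exact: (variation_ge0 variation_bounded xj0 xj1).
  - by apply: le_trans _ incr; rewrite lerDl eucl_norm_ge0.
rewrite -(big_mkord xpredT (fun j => F j.+1 - F j)) telescope_sumr //.
rewrite /F /x -(last_nth 0) (proj2 ps) /= gerBl exp_coeff_ge0//.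
exact: (variation_ge0 variation_bounded (lexx a) (le_trans at0 tb)).
Qed.

End SignatureBound.

Lemma norm_sig_ip_le (R : realType) (d : nat) (gamma sigma : R -> 'rV[R]_d)
    (a b M1 M2 : R) :
  (forall s, is_partition a b s -> path_variation_sum gamma a s <= M1) ->
  (forall s, is_partition a b s -> path_variation_sum sigma a s <= M2) ->
  forall k s t, a <= s -> s <= b -> a <= t -> t <= b ->
  `|sig_ip gamma sigma a k s t| <= exp_coeff (d%:R * M1 * M2) k.
Proof.
move=> bv_gamma bv_sigma k s t as0 sb at0 tb.
have coord_le (g : R -> 'rV[R]_d) M x (w : k.-tuple 'I_d) :
    (forall s, is_partition a b s -> path_variation_sum g a s <= M) ->
    a <= x -> x <= b -> `|sig_coord g a w x| <= exp_coeff M k.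
  move=> bv ax xb; apply: le_trans (norm_sigrev_le bv (rev w) ax xb) _.
  rewrite size_rev size_tuple; apply: ler_exp_coeff; first exact: (variation_ge0 bv ax xb).
  exact: (variation_le bv ax xb).
have M1_ge0 := bounded_variation_ge0 bv_gamma (le_trans as0 sb).
have M2_ge0 := bounded_variation_ge0 bv_sigma (le_trans as0 sb).
apply: le_trans _ (exp_coeff_mul_le _ _ M1_ge0 M2_ge0).
rewrite (_ : _ *+ _ = \sum_(w : k.-tuple 'I_d) exp_coeff M1 k * exp_coeff M2 k); last first.
  by rewrite sumr_const card_tuple card_ord.
apply: le_trans (ler_norm_sum _ _ _) _.
by apply: ler_sum => w _; rewrite normrM ler_pM// coord_le.
Qed.

Section DominatedSeries.
Variables (R : realType) (rho : R^nat) (B : R).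
Hypotheses (B_ge0 : 0 <= B) (rho_ge0 : forall k, 0 <= rho k).
Hypothesis cvg_rho : cvgn (series rho).

Lemma is_cvg_series_dominated (u : R^nat) :
  (forall k, `|u k| <= B * rho k) -> cvgn (series u).
Proof.
move=> u_le; apply: normed_cvg.
apply: (@series_le_cvg _ (fun k => `|u k|) (fun k => B * rho k)) => //.
- by move=> k; rewrite mulr_ge0.
- by rewrite (_ : (fun k => B * rho k) = B *: rho) //; exact: is_cvg_seriesZ.
Qed.

Lemma series_remainder_le (u : R^nat) N :
  (forall k, `|u k| <= B * rho k) ->
  `|limn (series u) - series u N| <= B * (limn (series rho) - series rho N).
Proof.
move=> u_le; set X := B * _.
have partial_le M : (N <= M)%N -> `|series u M - series u N| <= X.
  move=> NM; rewrite sub_series_geq//; apply: le_trans (ler_norm_sum _ _ _) _.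
  apply: (@le_trans _ _ (B * (series rho M - series rho N))).
    by rewrite sub_series_geq// mulr_sumr; apply: ler_sum => k _.
  apply: ler_wpM2l => //; rewrite lerB//.
  by apply: nondecreasing_cvgn_le => //; exact: nondecreasing_series.
have cvg_u := is_cvg_series_dominated u_le.
rewrite ler_distl; apply/andP; split.
- apply: limr_ge => //; exists N => // M /= /partial_le.
  by rewrite ler_distl => /andP[].
- apply: limr_le => //; exists N => // M /= /partial_le.
  by rewrite ler_distl => /andP[].
Qed.

End DominatedSeries.

Section IntegralOverPeriod.
Variable R : realType.
Local Notation D := (`]-pi, pi[%classic : set R).
Local Notation mu := (@lebesgue_measure R).

Let lebesgue_measure_period : mu D = (2 * pi)%:E.
Proof.
rewrite lebesgue_measure_itv/= lte_fin gtrN ?pi_gt0//.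
by rewrite opprK -mulr2n mulr_natl.
Qed.

Let mu_D_lt_oo : (mu D < +oo)%E.
Proof. by rewrite lebesgue_measure_period ltry. Qed.

Let fine_mu_D : fine (mu D) = 2 * pi.
Proof. by rewrite lebesgue_measure_period. Qed.

Lemma bounded_integrable_period (f : R -> R) (M : R) : measurable_fun D f ->
  (forall x, D x -> `|f x| <= M) -> mu.-integrable D (EFin \o f).
Proof.
move=> mf f_le; apply: measurable_bounded_integrable => //.
exists M; split; first exact: num_real.
by move=> N MN x Dx; apply: le_trans (f_le x Dx) (ltW MN).
Qed.

Lemma norm_int_pi_le (f : R -> R) (M : R) : measurable_fun D f ->
  (forall x, D x -> `|f x| <= M) -> `|int_pi f| <= 2 * pi * M.
Proof.
move=> mf f_le; have int_f := bounded_integrable_period mf f_le.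
rewrite /int_pi; apply: le_trans (le_normr_Rintegral _ int_f) _.
  exact: measurable_itv.
have int_M : mu.-integrable D (EFin \o cst M).
  by apply: (@bounded_integrable_period _ `|M|) => // x _; exact: ler_norm.
apply: le_trans (le_Rintegral _ _ int_M f_le) _; first exact: measurable_itv.
  apply: (@bounded_integrable_period _ M) => [|x Dx]; last by rewrite normr_id f_le.
  exact: measurableT_comp.
by rewrite Rintegral_cst// fine_mu_D mulrC.
Qed.

Section TermwiseIntegration.
Variables (c rho : R^nat) (h : nat -> R -> R) (B : R).
Hypotheses (B_ge0 : 0 <= B) (rho_ge0 : forall k, 0 <= rho k).
Hypotheses (c_le : forall k, `|c k| <= rho k) (cvg_rho : cvgn (series rho)).
Hypothesis measurable_h : forall k, measurable_fun D (h k).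
Hypothesis h_le : forall k x, D x -> `|h k x| <= B.

Let S N x := series (fun k => c k * h k x) N.
Let H x := limn (series (fun k => c k * h k x)).

Let term_le x : D x -> forall k, `|c k * h k x| <= B * rho k.
Proof. by move=> Dx k; rewrite normrM mulrC ler_pM// h_le. Qed.

Let measurable_S N : measurable_fun D (S N).
Proof. by apply: measurable_sum => k; apply: measurable_funM. Qed.

Let S_le N x : D x -> `|S N x| <= B * series rho N.
Proof.
move=> Dx; apply: le_trans (ler_norm_sum _ _ _) _.
by rewrite /series /= mulr_sumr; apply: ler_sum => k _; exact: term_le.
Qed.

Let H_sub_S_le N x : D x ->
  `|H x - S N x| <= B * (limn (series rho) - series rho N).
Proof. by move=> Dx; apply: series_remainder_le => //; exact: term_le. Qed.

Let int_pi_S N : int_pi (S N) = series (fun k => c k * int_pi (h k)) N.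
Proof.
have int_h k := bounded_integrable_period (measurable_h k) (h_le k).
elim: N => [|N IH].
  have -> : S 0 = cst 0 by apply/funext => x; rewrite /S /series /= big_geq.
  by rewrite /series /= big_geq// /int_pi Rintegral_cst ?mul0r//; exact: measurable_itv.
rewrite /series /= big_nat_recr//= -[X in X + _]IH /int_pi.
have int_S := bounded_integrable_period (measurable_S N) (S_le N).
have int_term := bounded_integrable_period
  (measurable_funM (measurable_cst (c N)) (measurable_h N)) (fun x Dx => term_le Dx N).
rewrite -RintegralZl; [|exact: measurable_itv|exact: int_h].
rewrite -RintegralD; [|exact: measurable_itv|exact: int_S|exact: int_term].
by apply: eq_Rintegral => x _; rewrite /S /series /= big_nat_recr.
Qed.

Lemma cvg_series_int_pi :
  series (fun k => c k * int_pi (h k)) @ \oo --> int_pi H.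
Proof.
set e := fun N => 2 * pi * (B * (limn (series rho) - series rho N)).
have e0 : e @ \oo --> 0.
  rewrite -(mulr0 (2 * pi)) -(mulr0 B) -(subrr (limn (series rho))).
  by apply: cvgMl_tmp; apply: cvgMl_tmp; apply: cvgB => //; exact: cvg_cst.
have measurable_H : measurable_fun D H.
  apply: (measurable_fun_cvg measurable_S) => x Dx.
  by apply: is_cvg_series_dominated (term_le Dx).
have int_H : mu.-integrable D (EFin \o H).
  apply: (bounded_integrable_period (M := B * limn (series rho)) measurable_H) => x Dx.
  by have := H_sub_S_le 0 Dx; rewrite /S /series /= !big_geq// !subr0.
have dist_le N : `|int_pi H - int_pi (S N)| <= e N.
  have int_S := bounded_integrable_period (measurable_S N) (S_le N).
  rewrite /int_pi -RintegralB; [|exact: measurable_itv|exact: int_H|exact: int_S].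
  apply: norm_int_pi_le => [|x]; last exact: H_sub_S_le.
  exact: measurable_funB measurable_H (measurable_S N).
have squeezed n : int_pi H - e n <=
    series (fun k => c k * int_pi (h k)) n <= int_pi H + e n.
  by rewrite -int_pi_S -ler_distlC; exact: dist_le.
apply: (squeeze_cvgr (nearW _ squeezed)).
- by rewrite -[X in _ --> X]subr0; apply: cvgB => //; exact: cvg_cst.
- by rewrite -[X in _ --> X]addr0; apply: cvgD => //; exact: cvg_cst.
Qed.

End TermwiseIntegration.
End IntegralOverPeriod.

(* [R[i]] carries no topology, so limits of complex sequences ([cvgC], [limC])
   are handled through their real and imaginary parts. *)
Section ComplexLimits.
Variable R : realType.
Implicit Types (u : nat -> R[i]) (z l : R[i]) (x : R).

Lemma Re_sum (I : Type) (r : seq I) (P : pred I) (F : I -> R[i]) :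
  complex.Re (\sum_(i <- r | P i) F i) = \sum_(i <- r | P i) complex.Re (F i).
Proof. by apply: (big_morph _ (id1 := 0)) => // -[? ?] [? ?]. Qed.

Lemma Im_sum (I : Type) (r : seq I) (P : pred I) (F : I -> R[i]) :
  complex.Im (\sum_(i <- r | P i) F i) = \sum_(i <- r | P i) complex.Im (F i).
Proof. by apply: (big_morph _ (id1 := 0)) => // -[? ?] [? ?]. Qed.

Lemma ReB z l : complex.Re (z - l) = complex.Re z - complex.Re l.
Proof. by case: z l => ? ? [? ?]. Qed.

Lemma ImB z l : complex.Im (z - l) = complex.Im z - complex.Im l.
Proof. by case: z l => ? ? [? ?]. Qed.

Lemma ReM z l :
  complex.Re (z * l) = complex.Re z * complex.Re l - complex.Im z * complex.Im l.
Proof. by case: z l => ? ? [? ?]. Qed.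

Lemma ImM z l :
  complex.Im (z * l) = complex.Re z * complex.Im l + complex.Im z * complex.Re l.
Proof. by case: z l => ? ? [? ?]. Qed.

Lemma Re_realCM x z : complex.Re (x%:C * z) = x * complex.Re z.
Proof. by case: z => ? ? /=; ring. Qed.

Lemma Im_realCM x z : complex.Im (x%:C * z) = x * complex.Im z.
Proof. by case: z => ? ? /=; ring. Qed.

Lemma normc_real x : `|x%:C| = `|x|%:C.
Proof. by rewrite normc_def /= expr0n addr0 sqrtr_sqr. Qed.

Lemma normc_i : `|'i : R[i]| = 1.
Proof. by rewrite normc_def /= expr0n add0r expr1n sqrtr1. Qed.

Lemma normc_ge_Im z : `|complex.Im z|%:C <= `|z|.
Proof.
have := normc_ge_Re (z * 'i); rewrite ReiNIm normrN normrM.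
by rewrite normc_i mulr1.
Qed.

Lemma normc_le_ReIm z : `|z| <= (`|complex.Re z| + `|complex.Im z|)%:C.
Proof.
rewrite {1}[z]complexE; apply: le_trans (ler_normD _ _) _.
by rewrite normrM normc_i mul1r !normc_real rmorphD.
Qed.

Lemma cvgC_Re u l : cvgC u l -> (fun n => complex.Re (u n)) @ \oo --> complex.Re l.
Proof.
move=> ul; apply/cvgrPdist_lt => e e0; have [N uN] := ul e e0.
exists N => // n /= /uN; rewrite distrC -ltcR -ReB; exact: le_lt_trans (normc_ge_Re _).
Qed.

Lemma cvgC_Im u l : cvgC u l -> (fun n => complex.Im (u n)) @ \oo --> complex.Im l.
Proof.
move=> ul; apply/cvgrPdist_lt => e e0; have [N uN] := ul e e0.
exists N => // n /= /uN; rewrite distrC -ltcR -ImB; exact: le_lt_trans (normc_ge_Im _).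
Qed.

Lemma cvgC_ReIm u l : (fun n => complex.Re (u n)) @ \oo --> complex.Re l ->
  (fun n => complex.Im (u n)) @ \oo --> complex.Im l -> cvgC u l.
Proof.
move=> /cvgrPdist_lt ua /cvgrPdist_lt ub e e0.
have e2 : 0 < e / 2 by rewrite divr_gt0.
have [Na _ uNa] := ua _ e2; have [Nb _ uNb] := ub _ e2.
exists (maxn Na Nb) => n; rewrite geq_max => /andP[/uNa/= an /uNb/= bn].
apply: le_lt_trans (normc_le_ReIm _) _; rewrite ltcR ReB ImB.
by rewrite distrC in an; rewrite distrC in bn; lra.
Qed.

Lemma cvgC_unique u l l' : cvgC u l -> cvgC u l' -> l = l'.
Proof.
move=> ul ul'; apply/eqP; rewrite eq_complex; apply/andP.
by split; apply/eqP; [exact: cvg_unique (cvgC_Re ul) (cvgC_Re ul')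
                    |exact: cvg_unique (cvgC_Im ul) (cvgC_Im ul')].
Qed.

Lemma cvgC_lim u l : cvgC u l -> limC u = l.
Proof.
move=> ul; apply: (cvgC_unique _ ul).
by have := xgetPex 0 (ex_intro (fun l => cvgC u l) l ul).
Qed.

Lemma cvgC_mulr u l z : cvgC u l -> cvgC (fun n => u n * z) (l * z).
Proof.
move=> ul; apply: cvgC_ReIm.
- under eq_fun do rewrite ReM; rewrite ReM.
  by apply: cvgB; apply: cvgMr_tmp; [exact: cvgC_Re|exact: cvgC_Im].
- under eq_fun do rewrite ImM; rewrite ImM.
  by apply: cvgD; apply: cvgMr_tmp; [exact: cvgC_Re|exact: cvgC_Im].
Qed.

Lemma cvgC_mull u l z : cvgC u l -> cvgC (fun n => z * u n) (z * l).
Proof. by move=> /(cvgC_mulr z); rewrite mulrC; under eq_fun do rewrite mulrC. Qed.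

Lemma cvgC_shiftS u l : cvgC u l -> cvgC (fun n => u n.+1) l.
Proof. by move=> ul e /ul[N uN]; exists N => n Nn; apply: uN; exact: leqW. Qed.

End ComplexLimits.

Section ComplexTermwiseIntegration.
Variable R : realType.
Local Notation D := (`]-pi, pi[%classic : set R).

Lemma eq_int_piC (F G : R -> R[i]) : {in D, F =1 G} -> int_piC F = int_piC G.
Proof.
by move=> FG; congr (_ +i* _); apply: eq_Rintegral => x /FG ->.
Qed.

Variables (c rho : R^nat) (h : nat -> R -> R[i]) (B : R).
Hypotheses (B_ge0 : 0 <= B) (rho_ge0 : forall k, 0 <= rho k).
Hypotheses (c_le : forall k, `|c k| <= rho k) (cvg_rho : cvgn (series rho)).
Hypothesis measurable_Re_h : forall k, measurable_fun D (fun x => complex.Re (h k x)).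
Hypothesis measurable_Im_h : forall k, measurable_fun D (fun x => complex.Im (h k x)).
Hypothesis h_le : forall k x, D x -> `|h k x| <= B%:C.

Let Re_h_le k x : D x -> `|complex.Re (h k x)| <= B.
Proof. by move=> Dx; rewrite -lecR; apply: le_trans (normc_ge_Re _) (h_le k Dx). Qed.

Let Im_h_le k x : D x -> `|complex.Im (h k x)| <= B.
Proof. by move=> Dx; rewrite -lecR; apply: le_trans (normc_ge_Im _) (h_le k Dx). Qed.

Let Re_partial_sum (F : nat -> R[i]) N :
  complex.Re (\sum_(k < N) (c k)%:C * F k) = series (fun k => c k * complex.Re (F k)) N.
Proof. by rewrite Re_sum seriesEord; apply: eq_bigr => k _; rewrite Re_realCM. Qed.

Let Im_partial_sum (F : nat -> R[i]) N :
  complex.Im (\sum_(k < N) (c k)%:C * F k) = series (fun k => c k * complex.Im (F k)) N.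
Proof. by rewrite Im_sum seriesEord; apply: eq_bigr => k _; rewrite Im_realCM. Qed.

Let cvg_series_dominated (F : nat -> R) : (forall k, `|F k| <= B) ->
  cvgn (series (fun k => c k * F k)).
Proof.
move=> F_le; apply: (is_cvg_series_dominated B_ge0 rho_ge0 cvg_rho) => k.
by rewrite normrM mulrC ler_pM.
Qed.

Lemma cvgC_series_int_piC :
  cvgC (fun N => \sum_(k < N) (c k)%:C * int_piC (h k))
       (int_piC (fun x => limC (fun N => \sum_(k < N) (c k)%:C * h k x))).
Proof.
set HRe := fun x => limn (series (fun k => c k * complex.Re (h k x))).
set HIm := fun x => limn (series (fun k => c k * complex.Im (h k x))).
have pointwise : {in D, forall x,
    limC (fun N => \sum_(k < N) (c k)%:C * h k x) = HRe x +i* HIm x}.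
  move=> x /set_mem Dx; apply: cvgC_lim; apply: cvgC_ReIm => /=.
  - under eq_fun do rewrite (Re_partial_sum (h^~ x)).
    by apply: cvg_series_dominated => k; exact: Re_h_le.
  - under eq_fun do rewrite (Im_partial_sum (h^~ x)).
    by apply: cvg_series_dominated => k; exact: Im_h_le.
rewrite (eq_int_piC pointwise); apply: cvgC_ReIm => /=.
- under eq_fun do rewrite (Re_partial_sum (fun k => int_piC (h k))).
  exact: (cvg_series_int_pi B_ge0 rho_ge0 c_le cvg_rho measurable_Re_h Re_h_le).
- under eq_fun do rewrite (Im_partial_sum (fun k => int_piC (h k))).
  exact: (cvg_series_int_pi B_ge0 rho_ge0 c_le cvg_rho measurable_Im_h Im_h_le).
Qed.

End ComplexTermwiseIntegration.

Section Expi.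
Variable R : realType.
Local Notation D := (`]-pi, pi[%classic : set R).

Lemma expiD (x y : R) : expi x * expi y = expi (x + y).
Proof. by rewrite /expi /= cosD sinD; congr (_ +i* _); ring. Qed.

Lemma expiX (x : R) k : expi x ^+ k = expi (k%:R * x).
Proof.
elim: k => [|k IH]; first by rewrite expr0 mul0r /expi cos0 sin0.
by rewrite exprS IH expiD -nat1r mulrDl mul1r addrC.
Qed.

Lemma normc_expi (x : R) : `|expi x| = 1.
Proof. by rewrite normc_def /= cos2Dsin2 sqrtr1. Qed.

Lemma measurable_mul_expi (F : R -> R[i]) (w : R) :
  measurable_fun D (fun x => complex.Re (F x)) ->
  measurable_fun D (fun x => complex.Im (F x)) ->
  measurable_fun D (fun x => complex.Re (F x * expi (w * x))) /\
  measurable_fun D (fun x => complex.Im (F x * expi (w * x))).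
Proof.
move=> mRe mIm.
have m_wx : measurable_fun D (fun x : R => w * x) by apply: measurable_funM.
have mcos : measurable_fun D (fun x => cos (w * x)).
  exact: measurableT_comp (continuous_measurable_fun (@continuous_cos R)) m_wx.
have msin : measurable_fun D (fun x => sin (w * x)).
  exact: measurableT_comp (continuous_measurable_fun (@continuous_sin R)) m_wx.
split.
- rewrite (_ : (fun x => _) = fun x =>
    complex.Re (F x) * cos (w * x) - complex.Im (F x) * sin (w * x)).
    by apply: measurable_funB; apply: measurable_funM.
  by apply/funext => x; rewrite ReM.
- rewrite (_ : (fun x => _) = fun x =>
    complex.Re (F x) * sin (w * x) + complex.Im (F x) * cos (w * x)).
    by apply: measurable_funD; apply: measurable_funM.
  by apply/funext => x; rewrite ImM.
Qed.

End Expi.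

Section UnitCircleSeries.
Variables (R : realType) (c rho : R^nat).
Hypotheses (rho_ge0 : forall k, 0 <= rho k) (c_le : forall k, `|c k| <= rho k).
Hypothesis cvg_rho : cvgn (series rho).

Lemma cvgC_series_expi (th : R) :
  cvgC (fun N => \sum_(k < N) expi th ^+ k * (c k)%:C)
    (limn (series (fun k => c k * cos (k%:R * th))) +i*
     limn (series (fun k => c k * sin (k%:R * th)))).
Proof.
have dominated (F : nat -> R) : (forall k, `|F k| <= 1) ->
    cvgn (series (fun k => c k * F k)).
  move=> F_le; apply: (is_cvg_series_dominated ler01 rho_ge0 cvg_rho) => k.
  by rewrite normrM mul1r -[rho k]mulr1 ler_pM.
apply: cvgC_ReIm => /=.
- rewrite (_ : (fun N => _) = series (fun k => c k * cos (k%:R * th))).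
    by apply: dominated => k; exact: cos_max.
  apply/funext => N; rewrite Re_sum seriesEord; apply: eq_bigr => k _.
  by rewrite expiX mulrC Re_realCM.
- rewrite (_ : (fun N => _) = series (fun k => c k * sin (k%:R * th))).
    by apply: dominated => k; exact: sin_max.
  apply/funext => N; rewrite Im_sum seriesEord; apply: eq_bigr => k _.
  by rewrite expiX mulrC Im_realCM.
Qed.

Lemma limC_series_expi_mulr (th : R) (z : R[i]) :
  limC (fun N => \sum_(k < N) expi th ^+ k * (c k)%:C) * z =
  limC (fun N => \sum_(k < N) (c k)%:C * (z * expi (k%:R * th))).
Proof.
rewrite (cvgC_lim (cvgC_series_expi th)); apply/esym/cvgC_lim.
have := cvgC_mulr z (cvgC_series_expi th); congr cvgC; apply/funext => N.
by rewrite mulr_suml; apply: eq_bigr => k _; rewrite expiX mulrAC mulrC [expi _ * z]mulrC.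
Qed.

End UnitCircleSeries.

Lemma sum_symmetric_causal (V : pzSemiRingType) (F : int -> V) (G : nat -> V) N :
  (forall k : int, k < 0 -> F k = 0) ->
  \sum_(i < (2 * N).+1) F (i%:Z - N%:Z) * G `|i%:Z - N%:Z|%N =
  \sum_(k < N.+1) F k%:Z * G k.
Proof.
move=> F_neg.
rewrite -(big_mkord xpredT (fun i => F (i%:Z - N%:Z) * G `|i%:Z - N%:Z|%N)).
rewrite (big_cat_nat _ (n := N)) //=; last by rewrite ltnW // ltnS mul2n -addnn leq_addl.
rewrite big_nat big1 ?add0r => [|i /andP[_ iN]]; last first.
  by rewrite F_neg ?mul0r// subr_lt0 ltz_nat.
rewrite -{1}(add0n N) big_addn (_ : (2 * N).+1 - N = N.+1)%N; last first.
  by rewrite mul2n -addnn -addSn addnK.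
by rewrite big_mkord; apply: eq_bigr => i _; rewrite PoszD addrK absz_nat.
Qed.

Lemma sig_ip0 (R : realType) (d : nat) (gamma sigma : R -> 'rV[R]_d) a s t :
  sig_ip gamma sigma a 0 s t = 1.
Proof.
rewrite /sig_ip (eq_bigr (fun=> 1)) => [|w _]; last by rewrite tuple0 /sig_coord /= mulr1.
by rewrite sumr_const card_tuple expn0.
Qed.

Lemma fourier_a_partial_sum (R : realType) (f : R -> R) (c : R^nat) N :
  c 0%N = 1 ->
  \sum_(k < N.+1) fourier_a f k * c k =
  pi^-1 * series (fun k => c k * int_pi (fun x => f x * cos (k%:R * x))) N.+1
  - fourier_a f 0.
Proof.
move=> c0; have I0 : int_pi (fun x => f x * cos (0 * x)) = int_pi f.
  by congr int_pi; apply/funext => x; rewrite mul0r cos0 mulr1.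
rewrite big_ord_recl seriesEord /= big_ord_recl /= c0 I0 mulr1 mul1r.
have -> : \sum_(i < N) fourier_a f (bump 0 i) * c (bump 0 i) = pi^-1 *
    \sum_(i < N) c (bump 0 i) * int_pi (fun x => f x * cos ((bump 0 i)%:R * x)).
  by rewrite mulr_sumr; apply: eq_bigr => i _; rewrite /fourier_a /= -mulrA [_ * c _]mulrC.
by rewrite /fourier_a /= invfM; lra.
Qed.

Section FourierKernels.
Variables (R : realType) (d : nat) (gamma sigma : R -> 'rV[R]_d) (a s t : R).
Variable rho : R^nat.
Local Notation c k := (sig_ip gamma sigma a k s t).
Local Notation D := (`]-pi, pi[%classic : set R).
Hypotheses (rho_ge0 : forall k, 0 <= rho k) (c_le : forall k, `|c k| <= rho k).
Hypothesis cvg_rho : cvgn (series rho).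

Let K_w_expi_mulr (th : R) (z : R[i]) : K_w (expi th) gamma sigma a s t * z =
  limC (fun N => \sum_(k < N) (c k)%:C * (z * expi (k%:R * th))).
Proof. exact: (limC_series_expi_mulr rho_ge0 c_le cvg_rho). Qed.

Let measurable_int_period (f : R -> R) :
  (@lebesgue_measure R).-integrable D (fun x => (f x)%:E) -> measurable_fun D f.
Proof. by move=> int_f; apply/measurable_EFinP; exact: measurable_int int_f. Qed.

Let zero_in_period : (0 : R) \in `]-pi, pi[.
Proof. by rewrite in_itv /= oppr_lt0 pi_gt0. Qed.

Lemma K_phi_fourier_coef (f : R -> R[i]) (Mf : R) :
  (forall x, x \in `]-pi, pi[ -> `|f x| <= Mf%:C) ->
  (@lebesgue_measure R).-integrable D (fun x => (complex.Re (f x))%:E) ->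
  (@lebesgue_measure R).-integrable D (fun x => (complex.Im (f x))%:E) ->
  (forall k : int, k < 0 -> fourier_coef f k = 0) ->
  K_phi (fourier_coef f) gamma sigma a s t =
  ((2 * pi)^-1)%:C * int_piC (fun x => K_w (expi (- x)) gamma sigma a s t * f x).
Proof.
move=> f_le int_Re int_Im phi_neg.
pose h k x := f x * expi (- k%:R * x).
have phiE k : fourier_coef f k%:Z = ((2 * pi)^-1)%:C * int_piC (h k).
  by rewrite /fourier_coef /h; under eq_fun do rewrite -mulNr.
have [m_Re_h m_Im_h] : (forall k, measurable_fun D (fun x => complex.Re (h k x))) /\
    (forall k, measurable_fun D (fun x => complex.Im (h k x))).
  by split=> k; have [] := measurable_mul_expi (- k%:R)
    (measurable_int_period int_Re) (measurable_int_period int_Im).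
have h_le k x : D x -> `|h k x| <= Mf%:C.
  by move=> Dx; rewrite normrM normc_expi mulr1 f_le ?inE.
have Mf_ge0 : 0 <= Mf.
  by rewrite -lecR; exact: le_trans (normr_ge0 (f 0)) (f_le 0 zero_in_period).
have termwise := cvgC_series_int_piC Mf_ge0 rho_ge0 c_le cvg_rho m_Re_h m_Im_h h_le.
rewrite (@eq_int_piC _ _ (fun x => limC (fun N => \sum_(k < N) (c k)%:C * h k x))).
  apply: cvgC_lim.
  under eq_fun do rewrite (@sum_symmetric_causal _ _ (fun n => (c n)%:C) _ phi_neg).
  have := cvgC_mull ((2 * pi)^-1)%:C (cvgC_shiftS termwise).
  congr cvgC; apply/funext => N; rewrite mulr_sumr; apply: eq_bigr => k _.
  by rewrite phiE mulrCA mulrC.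
move=> x _; rewrite K_w_expi_mulr.
by under eq_fun do under eq_bigr do rewrite mulrN -mulNr.
Qed.

Lemma K_phi_real_fourier (f : R -> R) (Mf : R) :
  (forall x, x \in `]-pi, pi[ -> `|f x| <= Mf) ->
  (@lebesgue_measure R).-integrable D (fun x => (f x)%:E) ->
  K_phi_real f gamma sigma a s t =
  pi^-1 * int_pi (fun x => complex.Re (K_w (expi x) gamma sigma a s t) * f x)
  - fourier_a f 0.
Proof.
move=> f_le int_f.
pose h k x := (f x)%:C * expi (k%:R * x).
have [m_Re_h m_Im_h] : (forall k, measurable_fun D (fun x => complex.Re (h k x))) /\
    (forall k, measurable_fun D (fun x => complex.Im (h k x))).
  by split=> k; have [] := @measurable_mul_expi _ (fun x => (f x)%:C) k%:R
    (measurable_int_period int_f) (measurable_cst (0 : R)).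
have h_le k x : D x -> `|h k x| <= Mf%:C.
  by move=> Dx; rewrite normrM normc_expi mulr1 normc_real lecR f_le ?inE.
have Mf_ge0 : 0 <= Mf := le_trans (normr_ge0 (f 0)) (f_le 0 zero_in_period).
pose H := int_piC (fun x => limC (fun N => \sum_(k < N) (c k)%:C * h k x)).
have cvg_series : series (fun k => c k * int_pi (fun x => f x * cos (k%:R * x)))
    @ \oo --> complex.Re H.
  rewrite (_ : series _ = fun N => complex.Re (\sum_(k < N) (c k)%:C * int_piC (h k))).
    exact: cvgC_Re (cvgC_series_int_piC Mf_ge0 rho_ge0 c_le cvg_rho m_Re_h m_Im_h h_le).
  apply/funext => N; rewrite Re_sum seriesEord; apply: eq_bigr => k _.
  by rewrite Re_realCM /=; congr (_ * int_pi _); apply/funext => x; rewrite mul0r subr0.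
have -> : int_pi (fun x => complex.Re (K_w (expi x) gamma sigma a s t) * f x) =
    complex.Re H.
  congr int_pi; apply/funext => x.
  by rewrite -K_w_expi_mulr [_ * (f x)%:C]mulrC Re_realCM mulrC.
rewrite /K_phi_real; apply: cvg_lim => //; rewrite -cvg_shiftS.
under eq_fun do
  rewrite (@fourier_a_partial_sum _ f (fun k => c k) _ (sig_ip0 gamma sigma a s t)).
apply: cvgB; last exact: cvg_cst.
by apply: cvgMl_tmp; rewrite (cvg_shiftS (series _)).
Qed.

End FourierKernels.

Theorem mainTheorem9 (R : realType) (d : nat) (gamma sigma : R -> 'rV[R]_d)
  (a b : R) :
  {within `[a, b], continuous gamma} ->
  {within `[a, b], continuous sigma} ->
  bounded_variation_path gamma a b ->
  bounded_variation_path sigma a b ->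
  (* (1) *)
  (forall f : R -> R[i],
     (exists M : R, forall x, x \in `]-pi, pi[ -> `|f x| <= M%:C) ->
     (@lebesgue_measure R).-integrable `]-pi, pi[%classic
        (fun x => (complex.Re (f x))%:E) ->
     (@lebesgue_measure R).-integrable `]-pi, pi[%classic
        (fun x => (complex.Im (f x))%:E) ->
     (forall k : int, k < 0 -> fourier_coef f k = 0) ->
     forall s t, s \in `[a, b] -> t \in `[a, b] ->
       K_phi (fourier_coef f) gamma sigma a s t =
       ((2 * pi)^-1)%:C *
         int_piC (fun x => K_w (expi (- x)) gamma sigma a s t * f x)) /\
  (* (2) *)
  (forall f : R -> R,
     (exists M : R, forall x, x \in `]-pi, pi[ -> `|f x| <= M) ->
     (@lebesgue_measure R).-integrable `]-pi, pi[%classic (fun x => (f x)%:E) ->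
     forall s t, s \in `[a, b] -> t \in `[a, b] ->
       K_phi_real f gamma sigma a s t =
       pi^-1 * int_pi (fun x => complex.Re (K_w (expi x) gamma sigma a s t) * f x)
       - fourier_a f 0).
Proof.
move=> _ _ [M1 bv_gamma] [M2 bv_sigma]; pose C := d%:R * M1 * M2.
have coef_summable s t : s \in `[a, b] -> t \in `[a, b] ->
    [/\ forall k, 0 <= exp_coeff C k,
        forall k, `|sig_ip gamma sigma a k s t| <= exp_coeff C k &
        cvgn (series (exp_coeff C))].
  rewrite !in_itv /= => /andP[as0 sb] /andP[at0 tb]; have ab := le_trans as0 sb.
  have M1_ge0 := bounded_variation_ge0 bv_gamma ab.
  have M2_ge0 := bounded_variation_ge0 bv_sigma ab.
  split=> [k|k|]; last exact: is_cvg_series_exp_coeff.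
  - by rewrite exp_coeff_ge0// !mulr_ge0.
  - exact: (norm_sig_ip_le bv_gamma bv_sigma k as0 sb at0 tb).
split.
- move=> f [Mf f_le] int_Re int_Im phi_neg s t s_ab t_ab.
  have [rho_ge0 c_le cvg_rho] := coef_summable s t s_ab t_ab.
  exact: (K_phi_fourier_coef rho_ge0 c_le cvg_rho f_le int_Re int_Im phi_neg).
- move=> f [Mf f_le] int_f s t s_ab t_ab.
  have [rho_ge0 c_le cvg_rho] := coef_summable s t s_ab t_ab.
  exact: (K_phi_real_fourier rho_ge0 c_le cvg_rho f_le int_f).
Qed.
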